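(* Let $\pi$ be a standard permutation on $\mathcal{A}$ and assume $M_\pi\in\mathcal{H}(m_1,\dots,m_n)$ with $m_1\ge2$ and $m_i\ge1$ for every $2\le i\le n$. Let $m_{1,1},m_{1,2}\ge1$ be any integers with $m_{1,1}+m_{1,2}=m_1$. Then there exists an irreducible permutation $\pi'$ which is a simple extension of $\pi$ and such that $M_{\pi'}\in\mathcal{H}(m_{1,1},m_{1,2},m_2,\dots,m_n)$.
   Context: A permutation on a finite alphabet $\mathcal{A}$ ($d=|\mathcal{A}|$) is a pair $\pi=(\pi_{\mathrm t},\pi_{\mathrm b})$ of bijections $\mathcal{A}\to\{1,\dots,d\}$, displayed with top row $\alpha_{\mathrm t,1}\cdots\alpha_{\mathrm t,d}$ and bottom row $\alpha_{\mathrm b,1}\cdots\alpha_{\mathrm b,d}$, $\alpha_{\varepsilon,j}=\pi_\varepsilon^{-1}(j)$; it is irreducible if $\pi_{\mathrm t}^{-1}(\{1,\dots,j\})\ne\pi_{\mathrm b}^{-1}(\{1,\dots,j\})$ for $1\le j<d$. $\pi$ is standard if $\pi_{\mathrm b}(\alpha_{\mathrm t,d})=1$ and $\pi_{\mathrm b}(\alpha_{\mathrm t,1})=d$. Given a letter $\alpha'\notin\mathcal{A}$ and $\beta,\beta'\in\mathcal{A}$ with $(\beta,\beta')\ne(\alpha_{\mathrm t,1},\alpha_{\mathrm b,1})$, the permutation on $\mathcal{A}\cup\{\alpha'\}$ obtained by inserting $\alpha'$ just before $\beta$ in the top row and just before $\beta'$ in the bottom row is called a simple extension of $\pi$. $M_\pi$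 is the translation surface obtained by suspension: the polygon $P_\pi$ whose top boundary consists of the vectors $1+i(\pi_{\mathrm b}(\alpha)-\pi_{\mathrm t}(\alpha))$ in the order of $\pi_{\mathrm t}$ and bottom boundary of the same vectors in the order of $\pi_{\mathrm b}$, both from $0$ to $d$, with sides labelled by the same letter identified by translation. $M_\pi\in\mathcal{H}(m_1,\dots,m_n)$ means that the distinct points of $M_\pi$ coming from vertices of $P_\pi$ (other than possible removable points of angle $2\pi$ — here all $m_i\ge1$) are cone points of total angles $2\pi(m_1+1),\dots,2\pi(m_n+1)$. *)

From mathcomp Require Import all_boot.
Set Implicit Arguments. Unset Strict Implicit. Unset Printing Implicit Defensive.

(* A permutation pi = (pi_t, pi_b) on a finite alphabet A of letters (taken
   in nat) is represented by its two rows: top row t = [alpha_{t,1};...;alpha_{t,d}]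
   and bottom row b = [alpha_{b,1};...;alpha_{b,d}].  Then
   pi_t(x) = (index x t).+1 and pi_b(x) = (index x b).+1. *)

Definition is_perm (t b : seq nat) : Prop := uniq t /\ perm_eq t b.

Definition irreducible (t b : seq nat) : Prop :=
  forall j, 1 <= j < size t -> ~ (take j t =i take j b).

Definition standard (t b : seq nat) : Prop :=
  index (nth 0 t (size t).-1) b = 0 /\ (index (nth 0 t 0) b).+1 = size t.

Definition insert_before (a beta : nat) (s : seq nat) : seq nat :=
  take (index beta s) s ++ a :: drop (index beta s) s.

Definition simple_extension (t b t' b' : seq nat) : Prop :=
  exists (a beta beta' : nat),
    [/\ a \notin t, beta \in t, beta' \in t &
        (beta, beta') <> (nth 0 t 0, nth 0 b 0)] /\
    t' = insert_before a beta t /\ b' = insert_before a beta' b.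

(* Vertices of the polygon P_pi: top vertices T_0..T_d (true, j) and bottom
   vertices B_0..B_d (false, j), where T_j (resp. B_j) is the endpoint of the
   j-th side of the top (resp. bottom) broken line; T_0 = B_0 = 0, T_d = B_d = d. *)
Definition vertex (t : seq nat) := (bool * 'I_(size t).+1)%type.

(* T_i and B_k are identified: either they coincide as points of the plane
   (i = k = 0 or i = k = d), or they are corresponding endpoints of the two
   copies of a side alpha (T_{pi_t(a)-1} ~ B_{pi_b(a)-1}, T_{pi_t(a)} ~ B_{pi_b(a)}). *)
Definition glued (t b : seq nat) (i k : nat) : bool :=
  [|| (i == 0) && (k == 0), (i == size t) && (k == size t)
    | has (fun x => ((index x t == i) && (index x b == k))
                    || (((index x t).+1 == i) && ((index x b).+1 == k))) t].

Definition vedge (t b : seq nat) : rel (vertex t) :=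
  fun u v =>
    match u, v with
    | (true, i), (false, k) => glued t b i k
    | (false, k), (true, i) => glued t b i k
    | _, _ => false
    end.

(* Points of M_pi coming from vertices = classes of connect (vedge t b).
   For an irreducible pi, P_pi is an x-monotone polygon (top line strictly
   above the bottom one on (0,d)); the interior angle at an interior bottom
   vertex B_j (0<j<d) contains exactly one upward vertical direction, and no
   other corner does.  Hence the total angle at a point is 2pi * (number of
   interior bottom vertices in its class), i.e. m + 1 = that number. *)
Definition cone_order (t b : seq nat) (v : vertex t) : nat :=
  #|[pred w : vertex t | connect (@vedge t b) v w && ~~ w.1
                          && (0 < w.2 < size t)]|.-1.

(* M_pi \in H(ms): the orders m of the non-removable (m >= 1) points of M_pi
   coming from vertices, listed with multiplicity, are ms (up to order). *)
Definition in_stratum (t b : seq nat) (ms : seq nat) : Prop :=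
  perm_eq [seq m <- [seq @cone_order t b v | v <- enum (roots (@vedge t b))] | 0 < m] ms.

(* Each top vertex T_i of P_pi is glued to exactly two bottom vertices: the
   end of the side arriving at T_i and the start of the side leaving it.  So the
   points of M_pi coming from vertices are the cycles of the permutation bsucc of
   the bottom vertices that climbs from B_k to the top vertex glued to it as the
   end of a side and comes back down to the start of the side leaving that vertex;
   a point has cone angle 2pi times the number of interior bottom vertices
   B_1, ..., B_(d-1) in its cycle.
   Take an interior B_k0 with k0 <> 1 in a cycle carrying m1 + 1 interior
   vertices, and q = bsucc^r(k0) such that bsucc(k0), ..., q carry m12 + 1 of
   them.  Inserting the new letter just before the top side leaving the vertex
   T_p glued to B_k0, and just before the bottom side leaving B_q, sends k0 to q
   and the new bottom vertex after q to bsucc(k0): the cycle of k0 splits into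
   cycles carrying m11 + 1 and m12 + 1 interior vertices, and the other cycles
   are only relabelled.  Since pi is standard its first top letter is its last
   bottom letter; the insertion happens after the former and before the latter,
   which keeps this so and forces irreducibility.  k0 <> 1 guarantees p < d. *)

From mathcomp Require Import all_boot zify.
Set Implicit Arguments. Unset Strict Implicit. Unset Printing Implicit Defensive.

Lemma card_pred_sum (T : finType) (Q : pred T) : #|[pred v | Q v]| = \sum_v Q v.
Proof. by rewrite -sum1_card big_mkcond /=; apply: eq_bigr => v _; rewrite inE; case: (Q v). Qed.

Lemma count_uniq_card (T : finType) (Q : pred T) (s : seq T) :
  uniq s -> count Q s = #|[pred x | (x \in s) && Q x]|.
Proof.
move=> us; rewrite -size_filter -(card_uniqP _) ?filter_uniq //.
by apply: eq_card => x; rewrite !inE mem_filter andbC.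
Qed.

Lemma card_gt1_avoid n (A : {pred 'I_n}) (j : nat) :
  1 < #|A| -> exists2 k : 'I_n, k \in A & k != j :> nat.
Proof.
case/card_gt1P => [k [l [k_A l_A neq_kl]]].
have [k_j | ] := eqVneq (k : nat) j; last by exists k.
by exists l => //; apply: contraNneq neq_kl => l_j; apply/eqP/val_inj; rewrite /= k_j l_j.
Qed.

Section ClassCounting.
Variables (V : finType) (e : rel V) (P : pred V).
Hypothesis e_sym : connect_sym e.

Definition class_weight v := #|[pred u | connect e v u && P u]|.

Lemma class_weight_root v : class_weight (root e v) = class_weight v.
Proof. by apply: eq_card => u; rewrite !inE -(same_connect e_sym (connect_root e v)). Qed.

Lemma card_class_weight k :
  #|[pred v | P v && (class_weight v == k)]|
    = k * #|[pred r | roots e r && (class_weight r == k)]|.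
Proof.
rewrite !card_pred_sum (partition_big (root e) (roots e)) /=; last first.
  by move=> v _; apply: roots_root.
rewrite big_distrr /= big_mkcond /=; apply: eq_bigr => r _.
case r_root: (roots e r) => /=; last by rewrite muln0.
transitivity (\sum_(v | root e v == r) ((class_weight r == k) && P v)).
  by apply: eq_bigr => v /eqP <-; rewrite class_weight_root andbC.
case: eqP => [<-|_] /=; last by rewrite big1 ?muln0.
rewrite muln1 /class_weight card_pred_sum big_mkcond /=; apply: eq_bigr => u _.
by rewrite -root_connect // (eqP r_root) eq_sym; case: (_ == _).
Qed.

Lemma count_class_orders n :
  count_mem n [seq m <- [seq (class_weight r).-1 | r <- enum (roots e)] | 0 < m]
    = (0 < n) * #|[pred r | roots e r && (class_weight r == n.+1)]|.
Proof.
rewrite count_filter count_map count_uniq_card ?enum_uniq //.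
case: n => [|n]; rewrite ?mul0n ?mul1n.
  by apply: eq_card0 => r; rewrite !inE; case: (class_weight r) => [|[|w]]; rewrite ?andbF.
apply: eq_card => r; rewrite !inE mem_enum.
by case: (class_weight r) => [|[|w]]; rewrite ?andbF ?andbT.
Qed.

(* A class of weight n + 1 contains n + 1 points of P, so the multiset of class
   orders can be read off from point counts. *)
Lemma class_ordersP ms :
  perm_eq [seq m <- [seq (class_weight r).-1 | r <- enum (roots e)] | 0 < m] ms <->
  all (fun m => 0 < m) ms /\
  forall n, 0 < n -> #|[pred v | P v && (class_weight v == n.+1)]| = n.+1 * count_mem n ms.
Proof.
split.
  move/permP => cnt; split.
    apply/allP => m m_ms; rewrite lt0n; apply: contraTneq m_ms => ->.
    by apply/count_memPn; rewrite -cnt count_class_orders.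
  by move=> n n_gt0; rewrite card_class_weight -(cnt (pred1 n)) count_class_orders n_gt0 mul1n.
case=> ms_pos cnt; apply/allP => n _; apply/eqP; rewrite count_class_orders.
case: n => [|n]; rewrite ?mul0n ?mul1n.
  by apply/esym/count_memPn; apply/negP => /(allP ms_pos).
by apply/eqP; rewrite -(eqn_pmul2l (ltn0Sn n.+1)) -card_class_weight cnt.
Qed.
End ClassCounting.

Definition interior {n} : pred 'I_n.+1 := fun k => 0 < k < n.

Definition orbit_weight n (f : 'I_n.+1 -> 'I_n.+1) k :=
  #|[pred l | fconnect f k l && interior l]|.

Definition weight_card n (f : 'I_n.+1 -> 'I_n.+1) w :=
  #|[pred k | interior k && (orbit_weight f k == w)]|.

Section OrbitWeight.
Variables (n : nat) (f : 'I_n.+1 -> 'I_n.+1).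

Lemma orbit_weightE x : orbit_weight f x = count interior (orbit f x).
Proof.
by rewrite (count_uniq_card _ (orbit_uniq f x)); apply: eq_card => y; rewrite !inE fconnect_orbit.
Qed.

Hypothesis f_inj : injective f.

Lemma orbit_weight_fconnect x y : fconnect f x y -> orbit_weight f y = orbit_weight f x.
Proof.
move=> xy; apply: eq_card => z; rewrite !inE.
by rewrite (same_connect (fconnect_sym f_inj) xy).
Qed.

Lemma order_fconnect x y : fconnect f x y -> order f y = order f x.
Proof.
move=> xy; apply: eq_card => z; rewrite -!topredE /=.
by rewrite (same_connect (fconnect_sym f_inj) xy).
Qed.
End OrbitWeight.

Lemma card_pair_false n (A : pred 'I_n) :
  #|[pred v : bool * 'I_n | ~~ v.1 && A v.2]| = #|A|.
Proof.
have inj_false : injective (pair false : 'I_n -> bool * 'I_n) by move=> x y [].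
rewrite -(card_image inj_false A); apply: eq_card => -[[] l]; rewrite !inE /=.
  by apply/esym/negbTE/negP => /imageP[x _ []].
by rewrite mem_image.
Qed.

Section BottomCycle.
Variables t b : seq nat.
Local Notation d := (size t).

(* T_i is glued to B_(bstart i) as the start of the top side nth t i (T_d to
   B_d) and to B_(bend i) as the end of the top side nth t i.-1 (T_0 to B_0);
   T_(tend k) is glued to B_k as the end of the bottom side nth b k.-1. *)
Definition bstart i := if i < d then index (nth 0 t i) b else d.
Definition bend i := if i == 0 then 0 else (index (nth 0 t i.-1) b).+1.
Definition tend k := if k == 0 then 0 else (index (nth 0 b k.-1) t).+1.
Definition bsucc k := bstart (tend k).
Definition bsucc_ord (k : 'I_d.+1) : 'I_d.+1 := inord (bsucc k).

Hypothesis tb : is_perm t b.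

Lemma uniq_top : uniq t. Proof. by case: tb. Qed.
Lemma uniq_bot : uniq b. Proof. by case: tb => t_uniq /perm_uniq <-. Qed.
Lemma size_bot : size b = d. Proof. by case: tb => _ /perm_size. Qed.
Lemma mem_bot x : (x \in b) = (x \in t). Proof. by case: tb => _ /perm_mem. Qed.

Lemma nth_top_in_bot i : i < d -> nth 0 t i \in b.
Proof. by move=> lt_id; rewrite mem_bot mem_nth. Qed.

Lemma nth_bot_in_top k : k < d -> nth 0 b k \in t.
Proof. by move=> lt_kd; rewrite -mem_bot mem_nth // size_bot. Qed.

Lemma bstart_le i : i <= d -> bstart i <= d.
Proof.
rewrite /bstart; case: ifP => // lt_id _.
by apply: ltnW; rewrite -size_bot index_mem nth_top_in_bot.
Qed.

Lemma bend_le i : i <= d -> bend i <= d.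
Proof.
rewrite /bend; case: i => //= i lt_id.
by rewrite -size_bot index_mem nth_top_in_bot.
Qed.

Lemma tend_le k : k <= d -> tend k <= d.
Proof. by rewrite /tend; case: k => //= k lt_kd; rewrite index_mem nth_bot_in_top. Qed.

Lemma bsucc_le k : k <= d -> bsucc k <= d.
Proof. by move=> le_kd; apply/bstart_le/tend_le. Qed.

Lemma bend_tend k : k <= d -> bend (tend k) = k.
Proof.
rewrite /tend /bend; case: k => //= k lt_kd.
by rewrite nth_index ?nth_bot_in_top // index_uniq ?uniq_bot ?size_bot.
Qed.

Lemma tend_bend i : i <= d -> tend (bend i) = i.
Proof.
rewrite /tend /bend; case: i => //= i lt_id.
by rewrite nth_index ?nth_top_in_bot // index_uniq ?uniq_top.
Qed.

Lemma bstart_inj i j : i <= d -> j <= d -> bstart i = bstart j -> i = j.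
Proof.
have bstart_lt l : l < d -> bstart l < d.
  by move=> lt_ld; rewrite /bstart lt_ld -size_bot index_mem nth_top_in_bot.
move=> le_id le_jd; case: (ltnP i d) => [lt_id | le_di]; case: (ltnP j d) => [lt_jd | le_dj].
- rewrite /bstart lt_id lt_jd => /(index_inj 0 (nth_top_in_bot lt_id) (nth_top_in_bot lt_jd)).
  by move/eqP; rewrite nth_uniq ?uniq_top // => /eqP.
- have -> : j = d by lia.
  by move=> E; move: (bstart_lt i lt_id); rewrite E /bstart !ltnn.
- have -> : i = d by lia.
  by move=> E; move: (bstart_lt j lt_jd); rewrite -E /bstart !ltnn.
- by lia.
Qed.

Lemma bsucc_inj k l : k <= d -> l <= d -> bsucc k = bsucc l -> k = l.
Proof.
move=> le_kd le_ld /(bstart_inj (tend_le le_kd) (tend_le le_ld)) E.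
by rewrite -(bend_tend le_kd) -(bend_tend le_ld) E.
Qed.

Lemma bsucc_ordE k : bsucc_ord k = bsucc k :> nat.
Proof. by rewrite inordK // ltnS bsucc_le // -ltnS. Qed.

Lemma bsucc_ord_inj : injective bsucc_ord.
Proof.
move=> k l E; apply/val_inj/(bsucc_inj (ltn_ord k) (ltn_ord l)).
by rewrite -!bsucc_ordE E.
Qed.

Lemma glued_bend i : i <= d -> glued t b i (bend i).
Proof.
rewrite /glued /bend; case: i => [|i] lt_id; first by rewrite eqxx.
apply/orP; right; apply/orP; right; apply/hasP; exists (nth 0 t i); first exact: mem_nth.
by rewrite index_uniq ?uniq_top // !eqxx orbT.
Qed.

Lemma glued_bstart i : i <= d -> glued t b i (bstart i).
Proof.
rewrite /glued /bstart; case: ltnP => [lt_id _ | le_di le_id].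
  apply/orP; right; apply/orP; right; apply/hasP; exists (nth 0 t i); first exact: mem_nth.
  by rewrite index_uniq ?uniq_top // !eqxx.
have -> : i = d by apply/eqP; rewrite eqn_leq le_id.
by rewrite eqxx orbT.
Qed.

Lemma glued_cases i k : glued t b i k -> k = bend i \/ k = bstart i.
Proof.
rewrite /glued /bend /bstart; case/or3P.
- by case/andP => /eqP -> /eqP ->; left.
- by case/andP => /eqP -> /eqP ->; right; rewrite ltnn.
case/hasP => x x_t /orP[] /andP[/eqP <- /eqP <-].
  by right; rewrite index_mem x_t nth_index.
by left; rewrite /= nth_index.
Qed.

Lemma vedge_sym : symmetric (@vedge t b).
Proof. by case=> [[] i] [[] j]. Qed.

(* Replacing T_i by B_(bend i) respects the gluing since its other neighbour
   B_(bstart i) is bsucc (bend i). *)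
Definition bottom_rep (v : vertex t) : 'I_d.+1 :=
  if v.1 then inord (bend v.2) else v.2.

Lemma vedge_bottom_rep k u v :
  @vedge t b u v -> fconnect bsucc_ord k (bottom_rep u) = fconnect bsucc_ord k (bottom_rep v).
Proof.
have key (i j : 'I_d.+1) : glued t b i j ->
    fconnect bsucc_ord k (inord (bend i)) = fconnect bsucc_ord k j.
  have le_id : i <= d by rewrite -ltnS.
  have bend_val : @inord d (bend i) = bend i :> nat by rewrite inordK // ltnS bend_le.
  case/glued_cases => j_val.
    suff -> : inord (bend i) = j by [].
    by apply/val_inj => /=; rewrite bend_val.
  rewrite (same_fconnect1_r bsucc_ord_inj); suff -> : bsucc_ord (inord (bend i)) = j by [].
  by apply/val_inj => /=; rewrite bsucc_ordE bend_val j_val /bsucc tend_bend.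
by case: u v => [[] i] [[] j] //= /key.
Qed.

Lemma connect_bottom k l :
  connect (@vedge t b) (false, k) (false, l) = fconnect bsucc_ord k l.
Proof.
apply/idP/idP.
  have cl : closed (@vedge t b) [pred v | fconnect bsucc_ord k (bottom_rep v)].
    by move=> u v /vedge_bottom_rep; rewrite !inE.
  by move/(closed_connect cl); rewrite !inE /= connect0 => <-.
move/iter_findex => <-; elim: (findex _ _ _) => [|n IH]; first exact: connect0.
apply: connect_trans IH _; rewrite iterS; set x := iter n bsucc_ord k.
have le_xd : x <= d by rewrite -ltnS.
have tend_val : @inord d (tend x) = tend x :> nat by rewrite inordK // ltnS tend_le.
apply: (@connect_trans _ _ (true, inord (tend x))); apply: connect1 => /=; rewrite tend_val.
  by rewrite -{2}(bend_tend le_xd); apply/glued_bend/tend_le.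
by rewrite bsucc_ordE; apply/glued_bstart/tend_le.
Qed.

Lemma in_stratumP ms :
  in_stratum t b ms <->
  all (fun m => 0 < m) ms /\
  forall n, 0 < n -> weight_card bsucc_ord n.+1 = n.+1 * count_mem n ms.
Proof.
pose P (v : vertex t) := ~~ v.1 && interior v.2.
have weightE l : class_weight (@vedge t b) P (false, l) = orbit_weight bsucc_ord l.
  rewrite /class_weight /orbit_weight -card_pair_false; apply: eq_card => -[c l'].
  by rewrite !inE /P; case: c; rewrite /= ?andbF ?connect_bottom.
have cardE w : #|[pred v | P v && (class_weight (@vedge t b) P v == w)]|
    = weight_card bsucc_ord w.
  rewrite /weight_card -card_pair_false; apply: eq_card => -[c l].
  by rewrite !inE /P; case: c => //=; rewrite weightE.
rewrite /in_stratum.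
have -> : [seq @cone_order t b v | v <- enum (roots (@vedge t b))]
    = [seq (class_weight (@vedge t b) P r).-1 | r <- enum (roots (@vedge t b))].
  apply: eq_map => v; rewrite /cone_order /class_weight; congr _.-1.
  by apply: eq_card => w; rewrite !inE /P /interior -!andbA.
apply: (iff_trans (class_ordersP P (sym_connect_sym vedge_sym) ms)).
by split=> -[ms_pos cnt]; split=> // n /cnt; rewrite cardE.
Qed.
End BottomCycle.

Arguments bsucc_ord : clear implicits.

Definition insert_at {T : Type} (a : T) p (s : seq T) := take p s ++ a :: drop p s.

Lemma perm_insert_at (T : eqType) (a : T) p s : perm_eq (insert_at a p s) (a :: s).
Proof. by rewrite /insert_at -cat1s perm_catCA cat_take_drop. Qed.

Section InsertAt.
Variables (T : Type) (x0 a : T) (p : nat) (s : seq T).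
Hypothesis le_ps : p <= size s.

Lemma size_insert_at : size (insert_at a p s) = (size s).+1.
Proof. by rewrite /insert_at size_cat /= size_takel // size_drop addnS subnKC. Qed.

Lemma nth_insert_at_new : nth x0 (insert_at a p s) p = a.
Proof. by rewrite /insert_at nth_cat size_takel // ltnn subnn. Qed.

Lemma nth_insert_at_shift i : nth x0 (insert_at a p s) (i + (p <= i)) = nth x0 s i.
Proof.
rewrite /insert_at nth_cat size_takel //; case: (ltnP i p) => [lt_ip | le_pi].
  by rewrite addn0 lt_ip nth_take.
by rewrite addn1 ltnNge ltnW //= subSn //= nth_drop subnKC.
Qed.
End InsertAt.

Section IndexInsertAt.
Variables (T : eqType) (a : T) (p : nat) (s : seq T).
Hypotheses (le_ps : p <= size s) (a_notin : a \notin s).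

Lemma index_insert_at_new : index a (insert_at a p s) = p.
Proof.
rewrite /insert_at index_cat ifN; last by apply: contra a_notin => /mem_take.
by rewrite /= eqxx addn0 size_takel.
Qed.

Lemma index_insert_at x : x \in s -> index x (insert_at a p s) = index x s + (p <= index x s).
Proof.
move=> x_s; have x_neq_a : x != a by apply: contraNneq a_notin => <-.
rewrite /insert_at index_cat in_take //; case: ltnP => [lt_xp | le_px].
  by rewrite addn0 -{2}(cat_take_drop p s) index_cat in_take // lt_xp.
have -> : index x s = p + index x (drop p s).
  by rewrite -{1}(cat_take_drop p s) index_cat ifN ?size_takel // in_take // -leqNgt.
by rewrite /= eq_sym (negbTE x_neq_a) size_takel // addn1 addnS.
Qed.
End IndexInsertAt.

Section InsertLetter.
Variables (t b : seq nat) (a p q : nat).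
Hypotheses (tb : is_perm t b) (a_notin : a \notin t) (lt_pd : p < size t) (lt_qd : q < size t).
Local Notation t' := (insert_at a p t).
Local Notation b' := (insert_at a q b).

Let a_notin_b : a \notin b. Proof. by rewrite (mem_bot tb). Qed.
Let le_qb : q <= size b. Proof. by rewrite (size_bot tb) ltnW. Qed.
Let size_t' : size t' = (size t).+1. Proof. exact/size_insert_at/ltnW. Qed.

Lemma is_perm_insert : is_perm t' b'.
Proof.
case: tb => t_uniq tb_perm; split.
  by rewrite (perm_uniq (perm_insert_at _ _ _)) /= a_notin t_uniq.
rewrite (perm_trans (perm_insert_at _ _ _)) // perm_sym.
by rewrite (perm_trans (perm_insert_at _ _ _)) // perm_cons perm_sym.
Qed.

Lemma bstart_insert_new : bstart t' b' p = q.
Proof.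
by rewrite /bstart size_t' ltnS (ltnW lt_pd) (nth_insert_at_new _ _ (ltnW lt_pd))
  (index_insert_at_new le_qb a_notin_b).
Qed.

Lemma bstart_insert i : i <= size t ->
  bstart t' b' (i + (p <= i)) = bstart t b i + (q <= bstart t b i).
Proof.
move=> le_id; rewrite /bstart size_t'; case: (ltnP i (size t)) => [lt_id | le_di].
  rewrite (_ : i + (p <= i) < (size t).+1); last by case: (p <= i) => /=; lia.
  rewrite (nth_insert_at_shift _ _ (ltnW lt_pd)) (index_insert_at le_qb a_notin_b) //.
  exact: (nth_top_in_bot tb).
have -> : i = size t by lia.
by rewrite (ltnW lt_pd) addn1 ltnn (ltnW lt_qd) addn1.
Qed.

Lemma tend_insert_new : tend t' b' q.+1 = p.+1.
Proof.
by rewrite /tend /= (nth_insert_at_new _ _ le_qb) (index_insert_at_new (ltnW lt_pd) a_notin).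
Qed.

Lemma tend_insert k : k <= size t ->
  tend t' b' (k + (q < k)) = tend t b k + (p < tend t b k).
Proof.
rewrite /tend; case: k => [|k] //= lt_kd.
rewrite addSn /= ltnS (nth_insert_at_shift _ _ le_qb) (index_insert_at (ltnW lt_pd) a_notin) //.
exact: (nth_bot_in_top tb).
Qed.

Lemma bsucc_insert_new : bsucc t' b' q.+1 = bstart t b p + (q <= bstart t b p).
Proof. by rewrite /bsucc tend_insert_new -bstart_insert ?leqnn ?addn1 // ltnW. Qed.

Lemma bsucc_insert k : k <= size t ->
  bsucc t' b' (k + (q < k))
    = if tend t b k == p then q else bsucc t b k + (q <= bsucc t b k).
Proof.
move=> le_kd; rewrite /bsucc tend_insert //; case: eqP => [-> | neq_p].
  by rewrite ltnn addn0 bstart_insert_new.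
by rewrite ltn_neqAle eq_sym (introF eqP neq_p) bstart_insert // (tend_le tb).
Qed.
End InsertLetter.

Lemma card_split_by (T : finType) (B A : pred T) :
  #|[pred y | A y]| = #|[pred y | B y && A y]| + #|[pred y | ~~ B y && A y]|.
Proof.
by rewrite -(cardID B [pred y | A y]); congr (_ + _); apply: eq_card => y; rewrite !inE andbC.
Qed.

Lemma card_const_weight (T : finType) (O A : pred T) (W : T -> nat) w x :
  {in O, forall y, W y = w} -> #|[pred y | O y && A y]| = w ->
  #|[pred y | O y && (A y && (W y == x))]| = (x == w) * w.
Proof.
move=> W_const card_OA; case: eqP => [-> | neq_xw]; rewrite ?mul1n ?mul0n.
  rewrite -[in RHS]card_OA; apply: eq_card => y; rewrite !inE.
  by case O_y: (O y); rewrite //= W_const // eqxx andbT.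
apply: eq_card0 => y; rewrite !inE; case O_y: (O y) => //=.
by rewrite W_const // andbC; case: eqP => // E; case: neq_xw.
Qed.

Lemma fconnect_traject (T : finType) (f : T -> T) x m y :
  0 < m -> iter m f x = x -> fconnect f x y = (y \in traject f x m).
Proof.
move=> m_gt0 fmx; apply/idP/idP; last by case/trajectP => i _ ->; apply: fconnect_iter.
move/iter_findex => <-; apply/loopingP; rewrite /looping fmx.
by case: m m_gt0 {fmx} => // m _; rewrite mem_head.
Qed.

Section CycleSplit.
Variables (d d' : nat) (tau : 'I_d.+1 -> 'I_d.+1) (tau' : 'I_d'.+1 -> 'I_d'.+1).
Hypotheses (d'E : d' = d.+1) (tau_inj : injective tau) (tau'_inj : injective tau').
Variables (k0 q : 'I_d.+1) (r : nat).
Local Notation L := (order tau k0).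
Hypotheses (r_gt0 : 0 < r) (lt_rL : r < L) (q_def : q = iter r tau k0) (q_int : interior q).
(* tau' acts on one more point, inserted right after q.  Through the embeddings
   sgt (fixing q) and sge (sending q to the new point), tau' agrees with tau
   except that k0 now goes to q and the new point goes to tau k0: the tau-cycle
   of k0 is cut into the arcs S1 = q, ..., k0 and S2 = tau k0, ..., q. *)
Hypotheses
  (tau'_shift : forall k : 'I_d.+1, k != k0 ->
     tau' (inord (k + (q < k))) = tau k + (q <= tau k) :> nat)
  (tau'_k0 : tau' (inord (k0 + (q < k0))) = q :> nat)
  (tau'_new : tau' (inord q.+1) = tau k0 + (q <= tau k0) :> nat).

Let sgt (k : 'I_d.+1) : 'I_d'.+1 := inord (k + (q < k)).
Let sge (k : 'I_d.+1) : 'I_d'.+1 := inord (k + (q <= k)).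

Let sgtE k : sgt k = k + (q < k) :> nat.
Proof. by rewrite inordK // d'E; have := ltn_ord k; case: (q < k); lia. Qed.

Let sgeE k : sge k = k + (q <= k) :> nat.
Proof. by rewrite inordK // d'E; have := ltn_ord k; case: (q <= k); lia. Qed.

Let sgt_inj : injective sgt.
Proof.
move=> k l /(congr1 val); rewrite /= !sgtE => E; apply/val_inj => /=.
by move: E; case: ltnP; case: ltnP; lia.
Qed.

Let sge_inj : injective sge.
Proof.
move=> k l /(congr1 val); rewrite /= !sgeE => E; apply/val_inj => /=.
by move: E; case: leqP; case: leqP; lia.
Qed.

Let sge_sgt k : k != q -> sge k = sgt k.
Proof.
move=> neq_kq; apply/val_inj => /=; rewrite sgtE sgeE.
have : k <> q :> nat by move/val_inj/eqP; rewrite (negbTE neq_kq).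
by case: ltnP; case: leqP; lia.
Qed.

Let sgt_neq_sge_q k : sgt k != sge q.
Proof. by apply/eqP => /(congr1 val); rewrite /= sgtE sgeE leqnn; case: ltnP; lia. Qed.

Let interior_sgt k : interior (sgt k) = interior k.
Proof. by rewrite /interior sgtE; move: q_int (ltn_ord k); rewrite /interior; case: ltnP; lia. Qed.

Let interior_sge k : interior (sge k) = interior k.
Proof. by rewrite /interior sgeE; move: q_int (ltn_ord k); rewrite /interior; case: leqP; lia. Qed.

Let tau'_sgt k : k != k0 -> tau' (sgt k) = sge (tau k).
Proof. by move=> neq_kk0; apply/val_inj; rewrite /= sgeE tau'_shift. Qed.

Let tau'_sgt_k0 : tau' (sgt k0) = sgt q.
Proof. by apply/val_inj; rewrite /= sgtE ltnn addn0 tau'_k0. Qed.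

Let tau'_sge_q : tau' (sge q) = sge (tau k0).
Proof. by apply/val_inj; rewrite /= sgeE -tau'_new /sge leqnn addn1. Qed.

Let iter_k0_inj i j : i < L -> j < L -> iter i tau k0 = iter j tau k0 -> i = j.
Proof. by move=> lt_iL lt_jL E; rewrite -(findex_iter lt_iL) -(findex_iter lt_jL) E. Qed.

Let iter_neq_k0 i : 0 < i < L -> iter i tau k0 != k0.
Proof.
case/andP=> i_gt0 lt_iL; apply/eqP => /(iter_k0_inj lt_iL (leq_ltn_trans (leq0n i) lt_iL)).
by move=> i0; rewrite i0 in i_gt0.
Qed.

Let q_neq_k0 : q != k0.
Proof. by rewrite q_def iter_neq_k0 // r_gt0. Qed.

Let iter_neq_q j : r < j <= L -> iter j tau k0 != q.
Proof.
case/andP => lt_rj; rewrite leq_eqVlt => /predU1P[-> | lt_jL].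
  by rewrite iter_order // eq_sym q_neq_k0.
by apply/eqP; rewrite q_def => /(iter_k0_inj lt_jL lt_rL) E; rewrite E ltnn in lt_rj.
Qed.

Local Notation S1 := (traject tau q (L - r).+1).
Local Notation S2 := (traject tau (tau k0) r).

Let iter_tau'_sgt_q i : i <= L - r -> iter i tau' (sgt q) = sgt (iter (r + i) tau k0).
Proof.
elim: i => [|i IH] le_iLr; first by rewrite addn0 -q_def.
rewrite iterS (IH (ltnW le_iLr)) tau'_sgt; last by rewrite iter_neq_k0 //; lia.
by rewrite -iterS -addnS sge_sgt // iter_neq_q //; lia.
Qed.

Let iter_tau'_sge_q i : 0 < i <= r -> iter i tau' (sge q) = sge (iter i tau k0).
Proof.
elim: i => [|[|i] IH] // le_ir.
rewrite iterS IH; last by lia.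
rewrite sge_sgt ?tau'_sgt ?iter_neq_k0 //; try lia.
by apply/eqP; rewrite q_def => /iter_k0_inj; lia.
Qed.

Let traject_sgt : traject tau' (sgt q) (L - r).+1 = map sgt S1.
Proof.
suff gen m : m <= (L - r).+1 -> traject tau' (sgt q) m = map sgt (traject tau q m).
  exact: gen.
elim: m => [|m IH] le_m //.
rewrite !trajectSr map_rcons (IH (ltnW le_m)) iter_tau'_sgt_q; last by lia.
by rewrite q_def -iterD addnC.
Qed.

Let traject_sge : traject tau' (sge (tau k0)) r = map sge S2.
Proof.
suff gen m : m <= r -> traject tau' (sge (tau k0)) m = map sge (traject tau (tau k0) m).
  exact: gen.
elim: m => [|m IH] le_m //.
rewrite !trajectSr map_rcons (IH (ltnW le_m)).
rewrite -tau'_sge_q -iterSr iter_tau'_sge_q; last by lia.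
by rewrite iterSr.
Qed.

Let fconnect_sgt_q y : fconnect tau' (sgt q) y = (y \in map sgt S1).
Proof.
rewrite -traject_sgt (fconnect_traject y (ltn0Sn (L - r))) //.
by rewrite iterS iter_tau'_sgt_q // (subnKC (ltnW lt_rL)) iter_order // tau'_sgt_k0.
Qed.

Let fconnect_sge_q y : fconnect tau' (sge q) y = (y \in map sge S2).
Proof.
rewrite (same_fconnect1 tau'_inj) tau'_sge_q -traject_sge (fconnect_traject y r_gt0) //.
by rewrite -tau'_sge_q -iterSr iterS iter_tau'_sge_q ?r_gt0 ?leqnn // q_def.
Qed.

Let fconnect_k0_q : fconnect tau k0 q.
Proof. by rewrite q_def fconnect_iter. Qed.

Let fconnect_k0_S1 y : y \in S1 -> fconnect tau k0 y.
Proof. by case/trajectP => i _ ->; rewrite q_def -iterD fconnect_iter. Qed.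

Let fconnect_k0_S2 y : y \in S2 -> fconnect tau k0 y.
Proof. by case/trajectP => i _ ->; rewrite -iterSr fconnect_iter. Qed.

Let fconnect_k0_S y : fconnect tau k0 y -> (y \in S1) || (y \in S2).
Proof.
move=> k0y; rewrite -(iter_findex k0y); have := findex_max k0y.
case: (findex tau k0 y) => [|j] lt_jL.
  apply/orP; left; apply/trajectP; exists (L - r); first by lia.
  by rewrite q_def -iterD (subnK (ltnW lt_rL)) iter_order.
case: (leqP r j.+1) => [le_rj | lt_jr].
  apply/orP; left; apply/trajectP; exists (j.+1 - r); first by lia.
  by rewrite q_def -iterD subnK.
by apply/orP; right; apply/trajectP; exists j; [lia | rewrite iterSr].
Qed.

Let uniq_traject_k0 x m : fconnect tau k0 x -> m <= L -> uniq (traject tau x m).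
Proof.
move=> k0x le_mL; rewrite -(take_traject _ _ le_mL) -(order_fconnect tau_inj k0x).
exact/take_uniq/orbit_uniq.
Qed.

Let count_interior_arcs :
  count interior S1 + count interior S2 = orbit_weight tau k0 + 1.
Proof.
have -> : orbit_weight tau k0 = count interior (traject tau q L).
  by rewrite -(orbit_weight_fconnect tau_inj fconnect_k0_q) orbit_weightE /orbit
     (order_fconnect tau_inj fconnect_k0_q).
have -> : traject tau q L = S1 ++ traject tau (tau k0) r.-1.
  rewrite {1}(_ : L = (L - r).+1 + r.-1); last by lia.
  rewrite trajectD; congr (_ ++ traject tau _ _).
  by rewrite q_def -iterD addSn (subnK (ltnW lt_rL)) iterS iter_order.
have -> : S2 = rcons (traject tau (tau k0) r.-1) q.
  by rewrite -{1}(prednK r_gt0) trajectSr -iterSr prednK // q_def.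
by rewrite -cats1 !count_cat /= q_int addn0 addnA.
Qed.

Let weight_sgt_q_class y : fconnect tau' (sgt q) y -> orbit_weight tau' y = count interior S1.
Proof.
move=> /(orbit_weight_fconnect tau'_inj) ->.
have S1_uniq : uniq S1 by rewrite uniq_traject_k0 //; lia.
rewrite /orbit_weight (eq_card (B := [pred l | (l \in map sgt S1) && interior l])); last first.
  by move=> l; rewrite !inE fconnect_sgt_q.
rewrite -count_uniq_card ?(map_inj_uniq sgt_inj) // count_map.
by apply: eq_count => k; rewrite /= interior_sgt.
Qed.

Let weight_sge_q_class y : fconnect tau' (sge q) y -> orbit_weight tau' y = count interior S2.
Proof.
move=> /(orbit_weight_fconnect tau'_inj) ->.
have S2_uniq : uniq S2 by rewrite uniq_traject_k0 ?fconnect1 //; lia.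
rewrite /orbit_weight (eq_card (B := [pred l | (l \in map sge S2) && interior l])); last first.
  by move=> l; rewrite !inE fconnect_sge_q.
rewrite -count_uniq_card ?(map_inj_uniq sge_inj) // count_map.
by apply: eq_count => k; rewrite /= interior_sge.
Qed.

Let not_sgt_q_class y : fconnect tau' (sge q) y -> ~~ fconnect tau' (sgt q) y.
Proof.
move=> sge_q_y; apply/negP => sgt_q_y.
have : fconnect tau' (sgt q) (sge q).
  by apply: connect_trans sgt_q_y _; rewrite fconnect_sym.
by rewrite fconnect_sgt_q => /mapP [k _ E]; move: (sgt_neq_sge_q k); rewrite E eqxx.
Qed.

Let sgt_outside_k0_class k : ~~ fconnect tau k0 k ->
  ~~ fconnect tau' (sgt q) (sgt k) && ~~ fconnect tau' (sge q) (sgt k).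
Proof.
move=> k0_k; rewrite fconnect_sgt_q (mem_map sgt_inj) fconnect_sge_q.
rewrite (contra (@fconnect_k0_S1 k)) //=; apply/mapP => -[l l_S2 E].
have [E_lq | neq_lq] := eqVneq l q; first by move: (sgt_neq_sge_q k); rewrite E E_lq eqxx.
by move: k0_k; rewrite -(sgt_inj (etrans (esym (sge_sgt neq_lq)) (esym E))) fconnect_k0_S2.
Qed.

Let outside_split_classes y :
  ~~ fconnect tau' (sgt q) y -> ~~ fconnect tau' (sge q) y ->
  exists2 k, ~~ fconnect tau k0 k & y = sgt k.
Proof.
move=> sgt_q_y sge_q_y.
have neq_yq : y != q :> nat.
  apply: contraNneq sgt_q_y => y_q; suff -> : y = sgt q by exact: connect0.
  by apply/val_inj; rewrite /= sgtE y_q ltnn addn0.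
have neq_yq1 : y != q.+1 :> nat.
  apply: contraNneq sge_q_y => y_q; suff -> : y = sge q by exact: connect0.
  by apply/val_inj; rewrite /= sgeE y_q leqnn addn1.
have lt_yd : y < d.+2 by rewrite -d'E ltn_ord.
have [k y_sgt] : exists k, y = sgt k.
  case: (ltnP q y) => [lt_qy | le_yq].
    have lt_kd : y.-1 < d.+1 by lia.
    have lt_qk : q < y.-1 by lia.
    by exists (Ordinal lt_kd); apply/val_inj; rewrite /= sgtE /= lt_qk; lia.
  have lt_kd : y < d.+1 by move: (ltn_ord q); lia.
  by exists (Ordinal lt_kd); apply/val_inj; rewrite /= sgtE /= ltnNge le_yq addn0.
exists k => //; apply/negP => /fconnect_k0_S /orP[k_S1 | k_S2].
  by move: sgt_q_y; rewrite y_sgt fconnect_sgt_q (mem_map sgt_inj) k_S1.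
have neq_kq : k != q by apply: contraNneq neq_yq => E; rewrite y_sgt sgtE E ltnn addn0 eqxx.
by move: sge_q_y; rewrite y_sgt -sge_sgt // fconnect_sge_q (mem_map sge_inj) k_S2.
Qed.

Let weight_sgt k : ~~ fconnect tau k0 k -> orbit_weight tau' (sgt k) = orbit_weight tau k.
Proof.
move=> k0_k.
have k0_iter i : ~~ fconnect tau k0 (iter i tau k).
  apply: contra k0_k => /connect_trans; apply; by rewrite fconnect_sym // fconnect_iter.
have iter_sgt i : iter i tau' (sgt k) = sgt (iter i tau k).
  elim: i => [|i IH] //; rewrite iterS IH tau'_sgt; last first.
    by apply: contraNneq (k0_iter i) => ->; exact: connect0.
  by rewrite sge_sgt -?iterS //; apply: contraNneq (k0_iter i.+1) => ->.
rewrite /orbit_weight -(card_image sgt_inj); apply: eq_card => l; rewrite -!topredE /=.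
apply/andP/imageP => [[/iter_findex <- l_int] | [m /andP[k_m m_int] ->]].
  by rewrite iter_sgt; exists (iter (findex tau' (sgt k) l) tau k);
    rewrite // -topredE /= fconnect_iter -interior_sgt -iter_sgt.
by split; rewrite ?interior_sgt // -(iter_findex k_m) -iter_sgt fconnect_iter.
Qed.

Let card_sgt_q_class w :
  #|[pred y | fconnect tau' (sgt q) y && (interior y && (orbit_weight tau' y == w))]|
    = (w == count interior S1) * count interior S1.
Proof.
apply: card_const_weight => [y|]; first exact: weight_sgt_q_class.
exact: (weight_sgt_q_class (connect0 _ _)).
Qed.

Let card_sge_q_class w :
  #|[pred y | fconnect tau' (sge q) y &&
      (~~ fconnect tau' (sgt q) y && (interior y && (orbit_weight tau' y == w)))]|
    = (w == count interior S2) * count interior S2.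
Proof.
rewrite -(@card_const_weight _ (fconnect tau' (sge q)) interior (orbit_weight tau') _ w
  weight_sge_q_class (weight_sge_q_class (connect0 _ _))).
apply: eq_card => y; rewrite !inE.
by case sge_q_y: (fconnect tau' (sge q) y); rewrite //= (not_sgt_q_class sge_q_y).
Qed.

Let card_outside_classes w :
  #|[pred y | ~~ fconnect tau' (sge q) y &&
      (~~ fconnect tau' (sgt q) y && (interior y && (orbit_weight tau' y == w)))]|
    = #|[pred k | ~~ fconnect tau k0 k && (interior k && (orbit_weight tau k == w))]|.
Proof.
rewrite -(card_image sgt_inj); apply: eq_card => y; rewrite -!topredE /=.
apply/and3P/imageP => [[sge_q_y sgt_q_y y_w] | [k /andP[k0_k k_w] ->]].
  have [k k0_k y_sgt] := outside_split_classes sgt_q_y sge_q_y.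
  by exists k; rewrite // -topredE /= k0_k -interior_sgt -weight_sgt // -y_sgt.
case/andP: (sgt_outside_k0_class k0_k) => -> ->.
by split; rewrite // interior_sgt weight_sgt.
Qed.

Lemma weight_card_split m' m'' w :
  orbit_weight tau k0 = (m' + m'').+1 -> count interior S2 = m''.+1 ->
  weight_card tau' w + (w == (m' + m'').+1) * w
    = weight_card tau w + (w == m'.+1) * w + (w == m''.+1) * w.
Proof.
move=> k0_w S2_w; rewrite -k0_w -S2_w.
have -> : m'.+1 = count interior S1 by move: count_interior_arcs; rewrite k0_w S2_w; lia.
rewrite /weight_card (card_split_by (fconnect tau' (sgt q))) card_sgt_q_class.
rewrite (card_split_by (fconnect tau' (sge q))) card_sge_q_class card_outside_classes.
rewrite [in RHS](card_split_by (fconnect tau k0)).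
have -> : #|[pred k | fconnect tau k0 k && (interior k && (orbit_weight tau k == w))]|
    = (w == orbit_weight tau k0) * orbit_weight tau k0.
  by apply: card_const_weight => // k; exact: orbit_weight_fconnect.
by case: eqP => [->|]; case: eqP => [->|]; case: eqP => [->|] => *; lia.
Qed.
End CycleSplit.

Lemma count_traject_reach (T : Type) (f : T -> T) (P : pred T) x n c :
  0 < c <= count P (traject f x n) ->
  exists r, [/\ 0 < r <= n, P (iter r.-1 f x) & count P (traject f x r) = c].
Proof.
elim: n => [|n IH] /andP[c_gt0]; first by rewrite leqNgt c_gt0.
rewrite trajectSr -cats1 count_cat /= addn0.
case: (leqP c (count P (traject f x n))) => [le_c _ | lt_c le_c1].
  have [r [/andP[r_gt0 le_rn] Pr cnt]] := IH (introT andP (conj c_gt0 le_c)).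
  by exists r; rewrite r_gt0 ltnW.
have P_n : P (iter n f x) by move: lt_c le_c1; case: (P _) => /=; lia.
exists n.+1; split=> //; rewrite ?ltnSn // trajectSr -cats1 count_cat /= P_n addn0.
by move: lt_c le_c1; rewrite P_n; lia.
Qed.

Lemma exists_orbit_cut d (tau : 'I_d.+1 -> 'I_d.+1) (k0 : 'I_d.+1) m m' :
  injective tau -> 0 < m -> 0 < m' -> orbit_weight tau k0 = (m + m').+1 ->
  exists r, [/\ 0 < r < order tau k0, interior (iter r tau k0)
              & count interior (traject tau (tau k0) r) = m'.+1].
Proof.
move=> tau_inj m_gt0 m'_gt0 k0_w.
have orbit_cnt : count interior (traject tau (tau k0) (order tau k0)) = (m + m').+1.
  rewrite -k0_w -(orbit_weight_fconnect tau_inj (fconnect1 tau k0)) orbit_weightE /orbit.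
  by rewrite (order_fconnect tau_inj (fconnect1 tau k0)).
have [|r [/andP[r_gt0 le_rL] r_int cnt]] :=
    @count_traject_reach _ tau interior (tau k0) (order tau k0) m'.+1.
  by rewrite orbit_cnt; lia.
exists r; split => //; last by rewrite -iterSr prednK in r_int.
rewrite r_gt0 ltn_neqAle le_rL andbT; apply/eqP => r_L.
by move: cnt; rewrite r_L orbit_cnt; lia.
Qed.

Lemma in_stratum_split t b t' b' m m' m'' ms :
  is_perm t b -> is_perm t' b' -> in_stratum t b (m :: ms) -> 0 < m' -> 0 < m'' ->
  (forall w, weight_card (bsucc_ord t' b') w + (w == m.+1) * w
     = weight_card (bsucc_ord t b) w + (w == m'.+1) * w + (w == m''.+1) * w) ->
  in_stratum t' b' [:: m', m'' & ms].
Proof.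
move=> tb tb' /(in_stratumP tb) [/andP[_ ms_pos] cnt] m'_gt0 m''_gt0 split_w.
apply/(in_stratumP tb'); split; first by rewrite /= m'_gt0 m''_gt0.
move=> n n_gt0; have := split_w n.+1; rewrite cnt //= !eqSS.
rewrite [n == m]eq_sym [n == m']eq_sym [n == m'']eq_sym.
by case: (m == n); case: (m' == n); case: (m'' == n) => /=; nia.
Qed.

Section InsertionSplit.
Variables (t b : seq nat) (a : nat) (k0 : 'I_(size t).+1) (r : nat).
Local Notation tau := (bsucc_ord t b).
Local Notation p := (tend t b k0).
Local Notation q := (iter r tau k0).
Hypotheses (tb : is_perm t b) (a_notin : a \notin t) (lt_pd : p < size t).
Hypotheses (r_gt0 : 0 < r) (lt_rL : r < order tau k0) (q_int : interior q).
Local Notation t' := (insert_at a p t).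
Local Notation b' := (insert_at a q b).

Let lt_qd : q < size t. Proof. by case/andP: q_int. Qed.
Let tb' : is_perm t' b'. Proof. exact: is_perm_insert. Qed.
Let size_t' : size t' = (size t).+1. Proof. exact/size_insert_at/ltnW. Qed.

Let bsucc_ord_insert (k : 'I_(size t).+1) :
  bsucc_ord t' b' (inord (k + (q < k))) = bsucc t' b' (k + (q < k)) :> nat.
Proof.
rewrite bsucc_ordE // inordK // size_t'.
by have := ltn_ord k; case: (q < k); lia.
Qed.

Lemma in_stratum_insert m' m'' ms :
  in_stratum t b ((m' + m'') :: ms) -> 0 < m' -> 0 < m'' ->
  orbit_weight tau k0 = (m' + m'').+1 -> count interior (traject tau (tau k0) r) = m''.+1 ->
  in_stratum t' b' [:: m', m'' & ms].
Proof.
move=> strat m'_gt0 m''_gt0 k0_w arc_w.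
apply: (in_stratum_split tb tb' strat m'_gt0 m''_gt0) => w.
apply: (weight_card_split size_t' (bsucc_ord_inj tb) (bsucc_ord_inj tb') r_gt0 lt_rL erefl q_int)
  k0_w arc_w.
- move=> k neq_kk0; rewrite bsucc_ord_insert.
  rewrite (bsucc_insert tb a_notin lt_pd lt_qd (ltn_ord k)) ifN ?bsucc_ordE //.
  apply/negP => /eqP tend_k; move/eqP: neq_kk0; apply; apply/val_inj => /=.
  by rewrite -(bend_tend tb (ltn_ord k)) tend_k (bend_tend tb (ltn_ord k0)).
- by rewrite bsucc_ord_insert (bsucc_insert tb a_notin lt_pd lt_qd (ltn_ord k0)) eqxx.
- have lt_q1 : q.+1 < (size t').+1 by rewrite size_t' !ltnS ltnW.
  by rewrite (bsucc_ordE tb') inordK // (bsucc_insert_new tb a_notin lt_pd lt_qd) (bsucc_ordE tb).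
Qed.
End InsertionSplit.

Lemma notin_sumnS (s : seq nat) : (sumn s).+1 \notin s.
Proof.
suff le_sumn x : x \in s -> x <= sumn s by apply/negP => /le_sumn; lia.
by elim: s => //= y s IH; rewrite inE => /predU1P[-> | /IH]; lia.
Qed.

Lemma simple_extension_insert t b a p q :
  is_perm t b -> a \notin t -> 0 < p < size t -> q < size t ->
  simple_extension t b (insert_at a p t) (insert_at a q b).
Proof.
move=> tb a_notin /andP[p_gt0 lt_pd] lt_qd.
exists a, (nth 0 t p), (nth 0 b q); split; last first.
  by rewrite /insert_before !index_uniq ?(uniq_top tb) ?(uniq_bot tb) ?(size_bot tb).
split=> //; [exact: mem_nth | exact: nth_bot_in_top | case=> /eqP].
by rewrite nth_uniq ?(uniq_top tb) ?(ltn_trans p_gt0 lt_pd) // (gtn_eqF p_gt0).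
Qed.

Section Standard.
Variables t b : seq nat.
Hypotheses (tb : is_perm t b) (std : standard t b).

Lemma tend_standard (k : 'I_(size t).+1) :
  interior k -> k != 1 :> nat -> 0 < tend t b k < size t.
Proof.
case/andP => k_gt0 lt_kd neq_k1; have le_kd := ltnW lt_kd.
have bend_d : bend t b (size t) = 1.
  by rewrite /bend (gtn_eqF (ltn_trans k_gt0 lt_kd)); case: std => ->.
have -> : 0 < tend t b k by rewrite /tend (gtn_eqF k_gt0).
rewrite ltn_neqAle (tend_le tb le_kd) andbT; apply: (contra_neq _ neq_k1) => tend_d.
by rewrite -(bend_tend tb le_kd) tend_d bend_d.
Qed.

Lemma irreducible_insert a p q :
  a \notin t -> 0 < p < size t -> q < size t ->
  irreducible (insert_at a p t) (insert_at a q b).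
Proof.
move=> a_notin /andP[p_gt0 lt_pd] lt_qd j /andP[j_gt0].
rewrite (size_insert_at _ (ltnW lt_pd)) ltnS => le_jd prefixE.
have d_gt0 : 0 < size t := ltn_trans p_gt0 lt_pd.
pose x0 := nth 0 t 0; have x0_t : x0 \in t by rewrite mem_nth.
have x0_b : x0 \in b by rewrite (mem_bot tb).
have le_qb : q <= size b by rewrite (size_bot tb) ltnW.
have := prefixE x0.
rewrite !in_take ?(perm_mem (perm_insert_at _ _ _)) ?inE ?x0_t ?x0_b ?orbT //.
rewrite (index_insert_at (ltnW lt_pd) a_notin x0_t) (index_insert_at le_qb _ x0_b); last first.
  by rewrite (mem_bot tb).
have -> : index x0 t = 0 by rewrite index_uniq ?(uniq_top tb).
have -> : index x0 b = (size t).-1 by case: std => _ <-.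
rewrite (leqNgt p 0) p_gt0 (_ : q <= (size t).-1) /=; last by lia.
by rewrite add0n addn1 prednK // j_gt0 ltnNge le_jd.
Qed.
End Standard.

Theorem lemma6p5 (t b : seq nat) (m1 : nat) (ms : seq nat) (m11 m12 : nat) :
  is_perm t b -> standard t b ->
  in_stratum t b (m1 :: ms) -> 2 <= m1 -> all (fun m => 1 <= m) ms ->
  1 <= m11 -> 1 <= m12 -> m11 + m12 = m1 ->
  exists t' b' : seq nat,
    [/\ is_perm t' b', simple_extension t b t' b', irreducible t' b'
      & in_stratum t' b' [:: m11, m12 & ms]].
Proof.
(* Positivity of ms is part of in_stratum. *)
move=> tb std strat m1_ge2 _ m11_gt0 m12_gt0 m1E.
pose tau := bsucc_ord t b.
have [_ card_w] := (in_stratumP tb _).1 strat.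
have two_vertices : 1 < weight_card tau m1.+1 by rewrite card_w /= ?eqxx; lia.
have [k0] := card_gt1_avoid 1 two_vertices; rewrite inE => /andP[k0_int /eqP k0_w] k0_neq1.
rewrite -m1E in strat k0_w.
have [r [/andP[r_gt0 lt_rL] q_int arc_w]] :=
  exists_orbit_cut (bsucc_ord_inj tb) m11_gt0 m12_gt0 k0_w.
have /andP[p_gt0 lt_pd] := tend_standard tb std k0_int k0_neq1.
have lt_qd : iter r tau k0 < size t by case/andP: q_int.
have a_notin := notin_sumnS t.
exists (insert_at (sumn t).+1 (tend t b k0) t), (insert_at (sumn t).+1 (iter r tau k0) b).
split.
- exact: is_perm_insert.
- by apply: simple_extension_insert; rewrite ?p_gt0.
- by apply: irreducible_insert; rewrite ?p_gt0.
- exact: (in_stratum_insert tb a_notin lt_pd r_gt0 lt_rL q_int strat).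
Qed.
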